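(* Let $X$ be a $T_1$ topological space. The following are equivalent: (i) $C_c(X)_F=C_c(X)$; (ii) $X$ is discrete; (iii) $C_c(X)_F$ is a quotient ring of $C_c(X)$, i.e. for every nonzero $s\in C_c(X)_F$ there exists $r\in C_c(X)$ with $0\neq sr\in C_c(X)$.
   Context: $C_c(X)_F$ denotes the set of all functions $f:X\to\mathbb{R}$ whose range is countable and whose set of points of discontinuity is finite; $C_c(X)$ denotes the ring of continuous functions $X\to\mathbb{R}$ with countable range, a subring of $C_c(X)_F$. *)

From mathcomp Require Import all_boot all_order all_algebra.
From mathcomp Require Import all_classical all_reals all_analysis.
Set Implicit Arguments. Unset Strict Implicit. Unset Printing Implicit Defensive.
Import Order.TTheory GRing.Theory Num.Theory.
Import numFieldNormedType.Exports.
Local Open Scope classical_set_scope.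
Local Open Scope ring_scope.

Definition discrete_topological (X : topologicalType) : Prop :=
  forall A : set X, open A.

Definition discontinuities (X : topologicalType) (R : realType) (f : X -> R)
  : set X := [set x : X | ~ {for x, continuous f}].

Definition CcF (X : topologicalType) (R : realType) : set (X -> R) :=
  [set f | countable (range f) /\ finite_set (discontinuities f)].

Definition Cc (X : topologicalType) (R : realType) : set (X -> R) :=
  [set f | countable (range f) /\ continuous f].

From mathcomp Require Import all_boot all_order all_algebra.
From mathcomp Require Import all_classical all_reals all_analysis.
Set Implicit Arguments. Unset Strict Implicit. Unset Printing Implicit Defensive.
Import Order.TTheory GRing.Theory Num.Theory.
Import numFieldNormedType.Exports.
Local Open Scope classical_set_scope.
Local Open Scope ring_scope.

(* In a T1 space the indicator of a point x lies in C_c(X)_F: it is locally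
   constant away from x.  A continuous function vanishing outside x but not at
   x makes {x} open, being the preimage of the open set R \ {0}.  Hence if the
   indicator of every point is in C_c(X), or has a nonzero multiple in C_c(X),
   then all singletons are open and X is discrete; conversely on a discrete
   space every function is continuous, so C_c(X)_F = C_c(X) and r = 1 works. *)

Section IndicatorOfAPoint.
Context {R : realType} {X : topologicalType}.

Lemma countable_range_indic (A : set X) : countable (range (\1_A : X -> R)).
Proof.
apply/finite_set_countable/(sub_finite_set (@image_indic_sub _ R A setT)).
exact: finite_set2.
Qed.

Lemma indic_set1_id (x : X) : \1_[set x] x = 1 :> R.
Proof. by rewrite indicE mem_set. Qed.

Lemma indic_set1_neq (x y : X) : y != x -> \1_[set x] y = 0 :> R.
Proof. by move=> yx; rewrite indicE memNset // => /eqP; rewrite (negbTE yx). Qed.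

Lemma indic_set1_continuous_at (x y : X) : accessible_space X -> y != x ->
  {for y, continuous (\1_[set x] : X -> R)}.
Proof.
move=> T1X yx; have [U [oU Uy Ux]] := T1X y x yx.
apply: cvg_near_cst; apply: filterS (open_nbhs_nbhs (conj oU (set_mem Uy))).
move=> z Uz; rewrite !indic_set1_neq //.
by apply/eqP => zx; move: Ux; rewrite -zx inE /= => /(_ Uz).
Qed.

Lemma indic_set1_CcF (x : X) : accessible_space X -> \1_[set x] \in @CcF X R.
Proof.
move=> T1X; apply/mem_set; split; first exact: countable_range_indic.
apply: sub_finite_set (finite_set1 x) => y /= yD; apply/eqP/negPn/negP => yx.
by apply: yD; exact: indic_set1_continuous_at.
Qed.

Lemma indic_set1_mul_out (r : X -> R) (x y : X) : y != x ->
  (\1_[set x] \* r) y = 0.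
Proof. by move=> yx; rewrite /= indic_set1_neq ?mul0r. Qed.

End IndicatorOfAPoint.

Section DiscreteSpaces.
Context {R : realType} {X : topologicalType}.

Lemma open_set1_discrete : (forall x : X, open [set x]) -> discrete_topological X.
Proof.
move=> open1 A; rewrite openE => x Ax.
by apply: filterS (open_nbhs_nbhs (conj (open1 x) erefl)) => z ->.
Qed.

Lemma discrete_continuous (f : X -> R) : discrete_topological X -> continuous f.
Proof.
move=> dX x; apply: cvg_near_cst.
by apply: filterS (open_nbhs_nbhs (conj (dX [set x]) erefl)) => z ->.
Qed.

Lemma open_set1_continuous_supported (g : X -> R) (x : X) : continuous g ->
  g x != 0 -> (forall y, y != x -> g y = 0) -> open [set x].
Proof.
move=> cg gx0 gout.
have -> : [set x] = g @^-1` (~` [set 0]).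
  apply/seteqP; split => y /=; first by move=> ->; apply/eqP.
  by move=> gy0; apply/eqP/negPn/negP => /gout.
by apply: open_comp => [y _|]; [exact: cg | rewrite openC; exact: closed_eq].
Qed.

Lemma Cc_sub_CcF : @Cc X R `<=` @CcF X R.
Proof.
move=> f [cf contf]; split => //.
by apply: sub_finite_set (finite_set0 X) => y /(_ (contf y)).
Qed.

Lemma discrete_CcF_eq_Cc : discrete_topological X -> @CcF X R = @Cc X R.
Proof.
move=> dX; apply/seteqP; split; last exact: Cc_sub_CcF.
by move=> f [cf _]; split => //; exact: discrete_continuous.
Qed.

Lemma cst_Cc (c : R) : cst c \in @Cc X R.
Proof.
apply/mem_set; split; last by move=> x; exact: cvg_cst.
apply: finite_set_countable; apply: sub_finite_set (finite_set1 c).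
by move=> _ [y _ <-].
Qed.

End DiscreteSpaces.

Theorem theorem5p1 (R : realType) (X : topologicalType)
  (hT1 : @accessible_space X) :
  (@CcF X R = @Cc X R <-> @discrete_topological X) /\
  (@discrete_topological X <->
     (forall s : X -> R, s \in @CcF X R -> s != (fun _ => 0) ->
        exists r : X -> R, [/\ r \in @Cc X R, (s \* r) != (fun _ => 0)
                             & (s \* r) \in @Cc X R])).
Proof.
split; split; [|exact: discrete_CcF_eq_Cc| |].
- move=> CcF_Cc; apply: open_set1_discrete => x.
  have := indic_set1_CcF (R:=R) x hT1; rewrite CcF_Cc => /set_mem[_ cont1].
  apply: (open_set1_continuous_supported cont1).
    by rewrite indic_set1_id oner_eq0.
  exact: indic_set1_neq.
- move=> dX s /set_mem sCcF s0; exists (cst 1).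
  have -> : s \* cst 1 = s by apply/funext => y /=; rewrite mulr1.
  split => //; first exact: cst_Cc.
  by rewrite (discrete_CcF_eq_Cc dX) in sCcF; exact/mem_set.
- move=> quot; apply: open_set1_discrete => x.
  have indic_nz : \1_[set x] != (fun _ => 0 : R).
    by apply/eqP => /(congr1 (fun f => f x)) /eqP; rewrite indic_set1_id oner_eq0.
  have [r [_ nz /set_mem[_ cont]]] := quot _ (indic_set1_CcF (R:=R) x hT1) indic_nz.
  apply: (open_set1_continuous_supported cont _ (indic_set1_mul_out r (x:=x))).
  apply: contra_neq nz => sr0; apply/funext => y.
  by case: (eqVneq y x) => [->|/indic_set1_mul_out->].
Qed.
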